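(* Let $n \ge 3$ and let $x_1 < x_2 < \dots < x_n$ be real numbers. Then the maximum likelihood estimate $\hat\theta$ of the sample from the Cauchy distribution satisfies $$\left|\hat\theta - \frac{x_1+x_n}{2}\right| \le \frac{x_n - x_1}{2}.$$
   Context: $\mathbb{H} = \{\theta\in\mathbb{C}:\Im\theta>0\}$. The Cauchy distribution with parameter $\theta = \mu + i\sigma\in\mathbb{H}$ has density $f(x;\theta) = \frac{\sigma}{\pi}\frac{1}{(x-\mu)^2+\sigma^2}$; the maximum likelihood estimate is the (unique) maximizer over $\mathbb{H}$ of $\prod_{j=1}^n f(x_j;\theta)$. *)

From HB Require Import structures.
From mathcomp Require Import all_boot all_order all_algebra.
From mathcomp Require Import complex.
From mathcomp Require Import reals trigo.
Set Implicit Arguments. Unset Strict Implicit. Unset Printing Implicit Defensive.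
Import Order.TTheory GRing.Theory Num.Theory.
Local Open Scope ring_scope.
Local Open Scope complex_scope.

Definition upper_half_plane (R : realType) : pred R[i] := fun t => 0 < complex.Im t.

Definition cauchy_density (R : realType) (theta : R[i]) (x : R) : R :=
  complex.Im theta / (pi * ((x - complex.Re theta) ^+ 2 + complex.Im theta ^+ 2)).

(* Likelihood of the sample x_0, ..., x_(n-1) (0-indexed). *)
Definition cauchy_likelihood (R : realType) (n : nat) (x : nat -> R)
  (theta : R[i]) : R := \prod_(i < n) cauchy_density theta (x i).

Definition is_cauchy_MLE (R : realType) (n : nat) (x : nat -> R)
  (theta : R[i]) : Prop :=
  theta \in @upper_half_plane R /\
  forall t : R[i], t \in @upper_half_plane R ->
    cauchy_likelihood n x t <= cauchy_likelihood n x theta.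

Definition cmod (R : realType) (z : R[i]) : R :=
  Num.sqrt (complex.Re z ^+ 2 + complex.Im z ^+ 2).

From HB Require Import structures.
From mathcomp Require Import all_boot all_order all_algebra.
From mathcomp Require Import complex.
From mathcomp Require Import reals trigo.
From mathcomp Require Import ring lra.
Set Implicit Arguments. Unset Strict Implicit. Unset Printing Implicit Defensive.
Import Order.TTheory GRing.Theory Num.Theory.
Local Open Scope ring_scope.
Local Open Scope complex_scope.

(* Let c and r be the midpoint and half-length of [x_1, x_n] and suppose that
   |theta - c| > r.  Writing theta - c = a + i b and u = x - c, the homothety of
   centre c and ratio k = r^2 / (a^2 + b^2) < 1 turns the density
   b / (pi ((u - a)^2 + b^2)) at x into k b / (pi ((u - k a)^2 + k^2 b^2)), and
     b ((u - k a)^2 + k^2 b^2) - k b ((u - a)^2 + b^2) = b (1 - k) (u^2 - r^2).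
   So the density does not decrease at any point of [x_1, x_n] and increases at
   x_2: the likelihood strictly increases, contradicting maximality. *)

Lemma ltr_prod_le_lt (R : numDomainType) (I : finType) (E1 E2 : I -> R) (i0 : I) :
  (forall i, 0 < E1 i <= E2 i) -> E1 i0 < E2 i0 -> \prod_i E1 i < \prod_i E2 i.
Proof.
move=> E12 lt_i0; rewrite (bigD1 i0) //= [X in _ < X](bigD1 i0) //=.
have E1_gt0 i : 0 < E1 i by case/andP: (E12 i).
have le_rest : \prod_(i | i != i0) E1 i <= \prod_(i | i != i0) E2 i.
  by apply: ler_prod => i _; rewrite ltW ?(E1_gt0 i) ?(andP (E12 i)).2.
apply: (lt_le_trans (y := E2 i0 * \prod_(i | i != i0) E1 i)).
  by rewrite ltr_pM2r // prodr_gt0.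
by rewrite ler_pM2l // (lt_trans (E1_gt0 i0)).
Qed.

Lemma sorted_sample_between (R : numDomainType) n (x : nat -> R) :
  (forall i j : nat, (i < j)%N -> (j < n)%N -> x i < x j) ->
  forall j, (j < n)%N -> x 0%N <= x j <= x n.-1.
Proof.
move=> hx j lt_jn.
have le_jn1 : (j <= n.-1)%N by rewrite -ltnS prednK // (leq_ltn_trans _ lt_jn).
apply/andP; split.
  by case: j lt_jn {le_jn1} => // j lt_jn; rewrite ltW ?hx.
move: le_jn1; rewrite leq_eqVlt => /orP[/eqP -> //| lt_jn1].
by rewrite ltW ?hx // prednK // (leq_ltn_trans _ lt_jn).
Qed.

Section CauchyHomothety.
Variable R : realType.
Implicit Types (c k x : R) (theta : R[i]).

Definition homothety c k theta : R[i] :=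
  (c + k * (complex.Re theta - c)) +i* (k * complex.Im theta).

Lemma cmod_sub_real_sqr theta c :
  cmod (theta - c%:C) ^+ 2 = (complex.Re theta - c) ^+ 2 + complex.Im theta ^+ 2.
Proof.
case: theta => a b; rewrite /cmod sqr_sqrtr /=; first by rewrite subr0.
by rewrite addr_ge0 // sqr_ge0.
Qed.

Lemma cauchy_density_gt0 theta x :
  0 < complex.Im theta -> 0 < cauchy_density theta x.
Proof.
move=> Him; rewrite divr_gt0 // mulr_gt0 ?pi_gt0 //.
by rewrite ltr_wpDl ?sqr_ge0 ?exprn_gt0.
Qed.

Lemma homothety_in_upper_half_plane c k theta :
  0 < k -> theta \in @upper_half_plane R -> homothety c k theta \in @upper_half_plane R.
Proof. by move=> k_gt0; rewrite /in_mem /= /upper_half_plane /= => /(mulr_gt0 k_gt0). Qed.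

Let cauchy_density_homothety_difference c k theta x :
  complex.Im theta * (pi * ((x - complex.Re (homothety c k theta)) ^+ 2
                             + complex.Im (homothety c k theta) ^+ 2))
  - k * complex.Im theta * (pi * ((x - complex.Re theta) ^+ 2 + complex.Im theta ^+ 2))
  = complex.Im theta * pi * (1 - k)
    * ((x - c) ^+ 2 - k * cmod (theta - c%:C) ^+ 2).
Proof. by rewrite cmod_sub_real_sqr /=; ring. Qed.

Lemma ler_cauchy_density_homothety c k theta x :
  0 < complex.Im theta -> 0 < k < 1 ->
  (cauchy_density theta x <= cauchy_density (homothety c k theta) x)
  = ((x - c) ^+ 2 <= k * cmod (theta - c%:C) ^+ 2).
Proof.
move=> Him /andP[k_gt0 k_lt1].
rewrite /cauchy_density ler_pdivlMr; last first.
  by rewrite mulr_gt0 ?pi_gt0 // ltr_wpDl ?sqr_ge0 ?exprn_gt0 // mulr_gt0.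
rewrite mulrAC ler_pdivrMr; last by rewrite mulr_gt0 ?pi_gt0 // ltr_wpDl ?sqr_ge0 ?exprn_gt0.
rewrite -subr_le0 cauchy_density_homothety_difference pmulr_rle0 ?subr_le0 //.
by rewrite !mulr_gt0 ?pi_gt0 ?subr_gt0.
Qed.

Lemma ltr_cauchy_density_homothety c k theta x :
  0 < complex.Im theta -> 0 < k < 1 ->
  (cauchy_density theta x < cauchy_density (homothety c k theta) x)
  = ((x - c) ^+ 2 < k * cmod (theta - c%:C) ^+ 2).
Proof.
move=> Him /andP[k_gt0 k_lt1].
rewrite /cauchy_density ltr_pdivlMr; last first.
  by rewrite mulr_gt0 ?pi_gt0 // ltr_wpDl ?sqr_ge0 ?exprn_gt0 // mulr_gt0.
rewrite mulrAC ltr_pdivrMr; last by rewrite mulr_gt0 ?pi_gt0 // ltr_wpDl ?sqr_ge0 ?exprn_gt0.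
rewrite -subr_lt0 cauchy_density_homothety_difference pmulr_rlt0 ?subr_lt0 //.
by rewrite !mulr_gt0 ?pi_gt0 ?subr_gt0.
Qed.

Lemma cauchy_likelihood_homothety_lt n (x : nat -> R) c (r : R) theta (j0 : nat) :
  0 < complex.Im theta ->
  (forall j, (j < n)%N -> (x j - c) ^+ 2 <= r ^+ 2) ->
  (j0 < n)%N -> (x j0 - c) ^+ 2 < r ^+ 2 ->
  r ^+ 2 < cmod (theta - c%:C) ^+ 2 ->
  cauchy_likelihood n x theta
  < cauchy_likelihood n x (homothety c (r ^+ 2 / cmod (theta - c%:C) ^+ 2) theta).
Proof.
move=> Him x_le lt_j0 x_lt r_lt; set k := _ / _.
have r2_gt0 : 0 < r ^+ 2 := le_lt_trans (sqr_ge0 _) x_lt.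
have k_bounds : 0 < k < 1.
  by rewrite /k divr_gt0 ?ltr_pdivrMr ?mul1r // (lt_trans r2_gt0).
have r2E : k * cmod (theta - c%:C) ^+ 2 = r ^+ 2 by rewrite divfK // gt_eqF ?(lt_trans r2_gt0).
apply: (@ltr_prod_le_lt _ 'I_n _ _ (Ordinal lt_j0)) => [[j lt_jn]|] /=.
  by rewrite cauchy_density_gt0 ?ler_cauchy_density_homothety ?r2E ?x_le.
by rewrite ltr_cauchy_density_homothety ?r2E.
Qed.

End CauchyHomothety.

Theorem mainTheorem10 (R : realType) (n : nat) (x : nat -> R)
  (hn : (3 <= n)%N)
  (hx : forall i j : nat, (i < j)%N -> (j < n)%N -> x i < x j)
  (theta : R[i]) (hmle : is_cauchy_MLE n x theta) :
  cmod (theta - ((x 0%N + x n.-1) / 2)%:C) <= (x n.-1 - x 0%N) / 2.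
Proof.
case: hmle => theta_in theta_max.
set c := (x 0%N + x n.-1) / 2; set r := (x n.-1 - x 0%N) / 2.
have lt_1n1 : (1 < n.-1)%N by case: (n) hn => [|[|[|m]]].
have lt_n1n : (n.-1 < n)%N by case: (n) hn.
have [x0_lt_x1 x1_lt_xn] : x 0%N < x 1%N /\ x 1%N < x n.-1.
  by split; apply: hx => //; apply: ltn_trans lt_n1n.
have x_near j : (j < n)%N -> (x j - c) ^+ 2 <= r ^+ 2.
  by move=> /(sorted_sample_between hx) /andP[? ?]; rewrite /c /r; nra.
have x1_near : (x 1%N - c) ^+ 2 < r ^+ 2 by rewrite /c /r; nra.
have r_gt0 : 0 < r by rewrite /r; lra.
rewrite leNgt; apply/negP => r_lt.
have r2_lt : r ^+ 2 < cmod (theta - c%:C) ^+ 2.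
  by rewrite ltr_pXn2r ?nnegrE ?sqrtr_ge0 ?ltW.
have k_gt0 : 0 < r ^+ 2 / cmod (theta - c%:C) ^+ 2.
  by rewrite divr_gt0 ?exprn_gt0 // (lt_trans r_gt0).
have := cauchy_likelihood_homothety_lt (j0 := 1%N) theta_in x_near
  (ltn_trans lt_1n1 lt_n1n) x1_near r2_lt.
by rewrite ltNge theta_max ?homothety_in_upper_half_plane.
Qed.
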